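(* Let $S$ be a $\mathcal{C}$-semigroup with $S\ne\mathcal{C}$ and genus $g$. Then $S$ is symmetric if and only if $2g=\mathcal{F}(S)$.
   Context: An integer cone $\mathcal{C}\subseteq\mathbb{N}^p$ is the set of integer points of a finitely generated rational cone in $\mathbb{Q}_{\ge0}^p$. A $\mathcal{C}$-semigroup is a subset $S\subseteq\mathcal{C}$ containing $0$, closed under addition, with $\mathcal{C}\setminus S$ finite; $\mathcal{H}(S)=\mathcal{C}\setminus S$, $g=g(S)=\#\mathcal{H}(S)$. A monomial order $\preceq$ on $\mathbb{N}^p$ is fixed (total order, compatible with addition, $\mathbf 0\preceq\mathbf c$ for all $\mathbf c$), and $F(S)=\max_\preceq\mathcal{H}(S)$. $\mathrm{PF}(S)=\{\mathbf x\in\mathcal{H}(S)\mid \mathbf x+(S\setminus\{0\})\subseteq S\}$; $S$ is symmetric if $\mathrm{PF}(S)=\{F(S)\}$. $\mathbf x\le_{\mathcal{C}}\mathbf y$ means $\mathbf y-\mathbf x\in\mathcal{C}$; $I_S(\mathbf n)=\{\mathbf s\in S\mid \mathbf s\le_{\mathcal{C}}\mathbf n\}$. The generalized Frobenius number is $\mathcal{F}(S)=\#I_S(F(S))+g(S)$. *)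

From mathcomp Require Import all_boot all_order all_algebra.
Set Implicit Arguments. Unset Strict Implicit. Unset Printing Implicit Defensive.
Import Order.TTheory GRing.Theory Num.Theory.

Definition vec (p : nat) := {ffun 'I_p -> nat}.
Definition vzero p : vec p := [ffun => 0%N].
Definition vadd p (x y : vec p) : vec p := [ffun i => (x i + y i)%N].

(* Integer cone: integer points of the rational cone in Q_{>=0}^p generated
   by the finite family [gens] of vectors of Q_{>=0}^p. *)
Definition rat_gens_nonneg p (gens : seq {ffun 'I_p -> rat}) : Prop :=
  forall g, g \in gens -> forall i, (0 <= g i)%R.

Definition in_int_cone p (gens : seq {ffun 'I_p -> rat}) (x : vec p) : Prop :=
  exists lam : seq rat, size lam = size gens /\ (forall l, l \in lam -> (0 <= l)%R) /\
    forall i, ((x i)%:R = \sum_(j < size gens) lam`_j * (gens`_j) i)%R.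

Definition is_C_semigroup p (C S : vec p -> Prop) (H : seq (vec p)) : Prop :=
  [/\ (forall x, S x -> C x),
      S (vzero p),
      (forall x y, S x -> S y -> S (vadd x y)),
      uniq H &
      (forall x, x \in H <-> (C x /\ ~ S x))].

Definition monomial_order p (le : vec p -> vec p -> Prop) : Prop :=
  (forall x, le x x) /\
  (forall x y, le x y -> le y x -> x = y) /\
  (forall x y z, le x y -> le y z -> le x z) /\
  (forall x y, le x y \/ le y x) /\
  (forall x y z, le x y -> le (vadd x z) (vadd y z)) /\
  (forall c, le (vzero p) c).

Definition is_Frobenius p (le : vec p -> vec p -> Prop) (H : seq (vec p)) (Fr : vec p) :=
  Fr \in H /\ forall h, h \in H -> le h Fr.

Definition PF p (S : vec p -> Prop) (H : seq (vec p)) (x : vec p) : Prop :=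
  x \in H /\ forall s, S s -> s <> vzero p -> S (vadd x s).

Definition C_symmetric p (S : vec p -> Prop) (H : seq (vec p)) (Fr : vec p) : Prop :=
  forall x, PF S H x <-> x = Fr.

Definition leC p (C : vec p -> Prop) (x y : vec p) : Prop :=
  exists d, C d /\ y = vadd x d.

Definition I_S p (C S : vec p -> Prop) (n : vec p) (s : vec p) : Prop :=
  S s /\ leC C s n.

Definition has_card (T : eqType) (P : T -> Prop) (k : nat) : Prop :=
  exists s : seq T, [/\ uniq s, size s = k & (forall x, x \in s <-> P x)].

From mathcomp Require Import all_boot all_order all_algebra.
From mathcomp Require Import zify.
From Stdlib Require Import Classical.
Set Implicit Arguments. Unset Strict Implicit.
Import GRing.Theory Num.Theory.

(* The proof rests on the complement map  t |-> F - t,  which sends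
   I_S(F) = { t in S | t <=_C F } injectively into the set H of gaps
   (if F - t were in S, then F = t + (F - t) would be in S).  Hence
   #I_S(F) <= g always, and  2g = F(S)  says exactly that this map is onto.
   - If S is symmetric, every gap h lies below a pseudo-Frobenius element
     (a descent argument using finiteness of H), i.e. h + s = F for some
     s in S; so h = F - s is in the image and the map is a bijection.
   - Conversely, if the map is onto H, a pseudo-Frobenius x = F - t with
     t in S forces t = 0 (else x + t = F would be in S), and F itself is
     pseudo-Frobenius because F + s is a gap only if it is <= F in the
     monomial order, i.e. only if s = 0.
   The only property of the integer cone that is used is closure under
   addition, so the semigroup lemmas are stated for an arbitrary additive
   C; the main theorem instantiates them. *)

Section Vectors.
Variable p : nat.

Definition vsub (x y : vec p) : vec p := [ffun i => (x i - y i)%N].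
Definition vsum (x : vec p) : nat := (\sum_(i < p) x i)%N.

Lemma vaddC (x y : vec p) : vadd x y = vadd y x.
Proof. by apply/ffunP => i; rewrite !ffunE addnC. Qed.

Lemma vaddA (x y z : vec p) : vadd x (vadd y z) = vadd (vadd x y) z.
Proof. by apply/ffunP => i; rewrite !ffunE addnA. Qed.

Lemma vadd0 (x : vec p) : vadd x (vzero p) = x.
Proof. by apply/ffunP => i; rewrite !ffunE addn0. Qed.

Lemma vsub0 (x : vec p) : vsub x (vzero p) = x.
Proof. by apply/ffunP => i; rewrite !ffunE subn0. Qed.

Lemma vsub_add (x d : vec p) : vsub (vadd x d) x = d.
Proof. by apply/ffunP => i; rewrite !ffunE addKn. Qed.

Lemma vaddIr (d x y : vec p) : vadd x d = vadd y d -> x = y.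
Proof.
move=> E; apply/ffunP => i; have /eqP := congr1 (fun f : vec p => f i) E.
by rewrite !ffunE eqn_add2r => /eqP.
Qed.

Lemma vadd_eq_self (x s : vec p) : vadd x s = x -> s = vzero p.
Proof.
move=> E; apply/ffunP => i; have /eqP := congr1 (fun f : vec p => f i) E.
by rewrite !ffunE -{2}[x i]addn0 eqn_add2l => /eqP.
Qed.

Lemma vsub_inj_below (f t1 t2 d1 d2 : vec p) :
  f = vadd t1 d1 -> f = vadd t2 d2 -> vsub f t1 = vsub f t2 -> t1 = t2.
Proof.
move=> E1 E2; rewrite {1}E1 {1}E2 !vsub_add => Ed.
by apply: (@vaddIr d1); rewrite -E1 Ed -E2.
Qed.

Lemma vsumD (x y : vec p) : vsum (vadd x y) = (vsum x + vsum y)%N.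
Proof. by rewrite /vsum -big_split /=; apply: eq_bigr => i _; rewrite ffunE. Qed.

Lemma vsum_gt0 (t : vec p) : t <> vzero p -> (0 < vsum t)%N.
Proof.
move=> tn0; rewrite lt0n /vsum sum_nat_eq0; apply/negP => /forallP t0.
by apply: tn0; apply/ffunP => i; rewrite ffunE; apply/eqP/t0.
Qed.

Lemma cone_add (gens : seq {ffun 'I_p -> rat}) (x y : vec p) :
  in_int_cone gens x -> in_int_cone gens y -> in_int_cone gens (vadd x y).
Proof.
move=> [l1 [s1 [p1 e1]]] [l2 [s2 [p2 e2]]].
exists (mkseq (fun j => l1`_j + l2`_j)%R (size gens)).
split; first by rewrite size_mkseq.
split.
  move=> l /mapP [j]; rewrite mem_iota add0n => /andP[_ jl] ->.
  by apply: addr_ge0; [apply: p1 | apply: p2]; apply: mem_nth; rewrite ?s1 ?s2.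
move=> i; rewrite ffunE natrD e1 e2 -big_split /=; apply: eq_bigr => j _.
by rewrite nth_mkseq // mulrDl.
Qed.

End Vectors.

Section CSemigroup.
Variables (p : nat) (C S : vec p -> Prop) (H : seq (vec p)).
Hypothesis Cadd : forall x y, C x -> C y -> C (vadd x y).
Hypothesis SC : forall x, S x -> C x.
Hypothesis S0 : S (vzero p).
Hypothesis Sadd : forall x y, S x -> S y -> S (vadd x y).
Hypothesis Hdef : forall x, x \in H <-> (C x /\ ~ S x).

Lemma gap_add (h t : vec p) : h \in H -> S t -> ~ S (vadd h t) -> vadd h t \in H.
Proof.
move=> /Hdef[Ch _] St nS; apply/Hdef; split => //; exact: Cadd (SC St).
Qed.

Lemma summand_gap (t d : vec p) : S t -> C d -> vadd t d \in H -> d \in H.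
Proof. by move=> St Cd /Hdef[_ nS]; apply/Hdef; split => // Sd; apply: nS; apply: Sadd. Qed.

Lemma not_PF_step (h : vec p) : h \in H -> ~ PF S H h ->
  exists t, [/\ S t, t <> vzero p & vadd h t \in H].
Proof.
move=> hH nPF; apply: NNPP => noStep; apply: nPF; split => // t St tn0.
apply: NNPP => nS; apply: noStep; exists t; split => //; exact: gap_add.
Qed.

(* Every gap lies below a pseudo-Frobenius element.  The descent terminates
   because each step raises the degree, which is bounded on the finite H. *)
Lemma gap_below_PF (h : vec p) : h \in H -> exists s, S s /\ PF S H (vadd h s).
Proof.
pose N := (\sum_(x <- H) vsum x)%N.
have bnd x : x \in H -> (vsum x <= N)%N by move=> xH; rewrite /N (big_rem x xH) leq_addr.
move: {2}(N - vsum h)%N (leqnn (N - vsum h)) => slack.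
elim: slack h => [|n IH] h hn hH.
all: have [PFh | nPFh] := classic (PF S H h); first by exists (vzero p); rewrite vadd0.
all: have [t [St tn0 htH]] := not_PF_step hH nPFh.
all: have up : (vsum h < vsum (vadd h t))%N
       by rewrite vsumD -{1}[vsum h]addn0 ltn_add2l vsum_gt0.
all: have htN := bnd _ htH.
- by have := bnd _ hH; lia.
- have [|s [Ss PFs]] := IH (vadd h t) _ htH; first by lia.
  by exists (vadd t s); split; [exact: Sadd | rewrite vaddA].
Qed.

(* The Frobenius element is pseudo-Frobenius: a gap F + s is <= F in a
   monomial order, while F <= F + s, so s = 0. *)
Lemma Frobenius_PF (le : vec p -> vec p -> Prop) (Fr : vec p) :
  monomial_order le -> is_Frobenius le H Fr -> PF S H Fr.
Proof.
move=> [_ [lanti [_ [_ [ladd l0]]]]] [FrH Frmax]; split => // s Ss sn0.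
apply: NNPP => nS; apply: sn0; apply: (@vadd_eq_self _ Fr); apply: lanti.
- exact/Frmax/gap_add.
- by have := ladd _ _ Fr (l0 s); rewrite vaddC vadd0 vaddC.
Qed.

Variable Fr : vec p.
Hypothesis FrH : Fr \in H.

Lemma I_S_complement (t : vec p) :
  I_S C S Fr t -> Fr = vadd t (vsub Fr t) /\ vsub Fr t \in H.
Proof.
move=> [St [d [Cd E]]]; rewrite E vsub_add; split => //.
by apply: (summand_gap St Cd); rewrite -E.
Qed.

Lemma symmetric_gap_complement : C_symmetric S H Fr ->
  forall h, h \in H -> exists s, S s /\ Fr = vadd h s.
Proof.
move=> sym h hH; have [s [Ss PFs]] := gap_below_PF hH.
by exists s; split => //; apply/esym/(proj1 (sym _)).
Qed.

Lemma symmetric_card_I_S : C_symmetric S H Fr -> uniq H ->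
  has_card (I_S C S Fr) (size H).
Proof.
move=> sym uH; have compl := symmetric_gap_complement sym.
exists [seq vsub Fr h | h <- H]; split; last 1 first.
- move=> x; split.
  + move=> /mapP [h hH ->]; have [s [Ss E]] := compl h hH.
    rewrite E vsub_add; split => //; exists h; split; last by rewrite vaddC.
    by case: (proj1 (Hdef h) hH).
  + move=> Ix; have [E dH] := I_S_complement Ix.
    by apply/mapP; exists (vsub Fr x) => //; rewrite {1}E vaddC vsub_add.
- rewrite map_inj_in_uniq // => h1 h2 h1H h2H.
  have [s1 [_ E1]] := compl h1 h1H; have [s2 [_ E2]] := compl h2 h2H.
  exact: vsub_inj_below E1 E2.
- by rewrite size_map.
Qed.

Lemma card_I_S_complement : has_card (I_S C S Fr) (size H) ->
  forall x, x \in H -> exists t, I_S C S Fr t /\ x = vsub Fr t.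
Proof.
move=> [s [us ss ms]] x xH.
have sub : {subset [seq vsub Fr t | t <- s] <= H}.
  by move=> y /mapP [t /ms/I_S_complement [_ ?] ->].
have uS : uniq [seq vsub Fr t | t <- s].
  rewrite map_inj_in_uniq // => t1 t2 /ms/I_S_complement[E1 _] /ms/I_S_complement[E2 _].
  exact: vsub_inj_below E1 E2.
have [_ eqH] := uniq_min_size uS sub ltac:(by rewrite size_map ss).
by rewrite -eqH in xH; case/mapP: xH => t /ms It ->; exists t.
Qed.

Lemma PF_complement (t : vec p) : I_S C S Fr t -> PF S H (vsub Fr t) -> vsub Fr t = Fr.
Proof.
move=> It [_ PFx]; have [E _] := I_S_complement It.
have [-> | tn0] := eqVneq t (vzero p); first exact: vsub0.
have [_ FrnS] := proj1 (Hdef Fr) FrH.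
by exfalso; apply: FrnS; rewrite E vaddC; apply: PFx (proj1 It) _; apply/eqP.
Qed.

Lemma card_I_S_symmetric (le : vec p -> vec p -> Prop) :
  monomial_order le -> is_Frobenius le H Fr ->
  has_card (I_S C S Fr) (size H) -> C_symmetric S H Fr.
Proof.
move=> mo isF card x; split; last by move=> ->; exact: Frobenius_PF mo isF.
move=> PFx; have [t [It xE]] := card_I_S_complement card (proj1 PFx).
by rewrite xE; apply: PF_complement; rewrite -?xE.
Qed.

End CSemigroup.

Theorem mainTheorem6 (p : nat) (gens : seq {ffun 'I_p -> rat})
  (le : vec p -> vec p -> Prop) (S : vec p -> Prop) (H : seq (vec p)) (Fr : vec p) :
  rat_gens_nonneg gens ->
  monomial_order le ->
  is_C_semigroup (in_int_cone gens) S H ->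
  H <> [::] ->
  is_Frobenius le H Fr ->
  C_symmetric S H Fr <->
  exists k, has_card (I_S (in_int_cone gens) S Fr) k /\ (2 * size H = k + size H)%N.
Proof.
move=> _ mo [SC S0 Sadd uH Hdef] _ isF.
have Cadd := @cone_add p gens.
have FrH := proj1 isF.
split.
- move=> sym; exists (size H); split; last by rewrite mul2n -addnn.
  exact: symmetric_card_I_S.
- move=> [k [card ek]]; have ekH : k = size H by lia.
  by subst k; apply: card_I_S_symmetric mo isF card.
Qed.
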